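(* Let $\alpha\in(0,1)$. The equation $1/\alpha+(1+1/\alpha)z-z^{2-\alpha/2}=0$ has a unique positive root $z=r^*=r^*(\alpha)$, and $$\mathrm{g}(x,y,\alpha):=\frac{2+2(1+\alpha)x-\alpha x^{2-\alpha/2}}{1+x}-\frac{\alpha y^{2-\alpha/2}}{1+y}>0\qquad\text{for all } 0\le x,y<r^*.$$ *)

(* MathComp + MathComp-Analysis, over an arbitrary R : realType.
   Real powers z^p are mathcomp-analysis' powR (written z `^ p), with 0 `^ p = 0 for p <> 0. *)
From HB Require Import structures.
From mathcomp Require Import all_boot all_order all_algebra.
From mathcomp Require Import all_classical all_reals all_analysis.
Set Implicit Arguments. Unset Strict Implicit. Unset Printing Implicit Defensive.
Import Order.TTheory GRing.Theory Num.Theory.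
Local Open Scope ring_scope.

Definition rstar_eq {R : realType} (a z : R) : R :=
  a^-1 + (1 + a^-1) * z - z `^ (2 - a / 2).

Definition gfun {R : realType} (x y a : R) : R :=
  (2 + 2 * (1 + a) * x - a * x `^ (2 - a / 2)) / (1 + x)
  - a * y `^ (2 - a / 2) / (1 + y).

(* Write q = 1 - a/2, so that z^(2-a/2) = z * z^q.  For z > 0 the equation
   says a z^q = 1/z + 1 + a: an increasing function meets a decreasing one, so
   there is at most one positive root r, and one exists by the intermediate
   value theorem.  On [0, r] the convex function t |-> a t^(2-a/2) lies below
   its chord s t, where s = a r^q satisfies s r = 1 + (1+a) r.  Replacing both
   power terms of g by the chord leaves a rational inequality: the y-term is
   below s r / (1 + r), and the x-term, a homographic function of x equal to 2
   at 0 and to s r / (1 + r) at r, stays above that value on [0, r]. *)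

From HB Require Import structures.
From mathcomp Require Import all_boot all_order all_algebra.
From mathcomp Require Import all_classical all_reals all_analysis.
From mathcomp Require Import ring lra.
Import Order.TTheory GRing.Theory Num.Theory.
Import numFieldNormedType.Exports.

Set Implicit Arguments.
Unset Strict Implicit.
Local Open Scope ring_scope.

Lemma powR_2_sub_half (R : realType) (a z : R) : a < 4 -> 0 <= z ->
  z `^ (2 - a / 2) = z * z `^ (1 - a / 2).
Proof.
move=> a_lt4 z_ge0; rewrite -mulr_powRB1 //; last lra.
by congr (_ * _ `^ _); lra.
Qed.

Section RstarRoot.
Variables (R : realType) (a : R).

Lemma rstar_eqE (z : R) : 0 < a -> a < 2 -> 0 <= z ->
  rstar_eq a z = a^-1 + (1 + a^-1) * z - z * z `^ (1 - a / 2).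
Proof.
by move=> a_gt0 a_lt2 z_ge0; rewrite /rstar_eq powR_2_sub_half //; lra.
Qed.

Lemma derivable_rstar_eq (z : R) : 0 < z -> derivable (rstar_eq a) z 1.
Proof.
move=> z_gt0; apply: derivableB.
  by apply: derivableD; [exact: derivable_cst | exact: derivableM].
by apply: derivable_powR; rewrite in_itv /= andbT.
Qed.

Lemma rstar_eq1_gt0 : 0 < a -> a < 2 -> 0 < rstar_eq a 1.
Proof.
move=> a_gt0 a_lt2; rewrite rstar_eqE ?powR1 ?ler01 //.
have : 0 < a^-1 by rewrite invr_gt0.
lra.
Qed.

Lemma exists_rstar_eq_lt0 : 0 < a -> a < 2 ->
  exists2 M : R, 1 <= M & rstar_eq a M < 0.
Proof.
move=> a_gt0 a_lt2; have q_gt0 : 0 < 1 - a / 2 by lra.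
have ia_gt0 : 0 < a^-1 by rewrite invr_gt0.
(* M^q = 2 + 2/a turns rstar_eq a M into 1/a - (1 + 1/a) M. *)
pose K := 2 + 2 * a^-1; pose M := K `^ (1 - a / 2)^-1.
have M_ge1 : 1 <= M.
  have := @ge0_ler_powR _ (1 - a / 2)^-1 _ 1 K.
  by rewrite powR1 !nnegrE invr_ge0 ltW // ler01 /K; apply => //; lra.
have MK : M `^ (1 - a / 2) = K.
  by rewrite -powRrM mulVf ?gt_eqF // powRr1 // /K; lra.
exists M => //; rewrite rstar_eqE //; last lra.
by rewrite MK /K; nra.
Qed.

Lemma exists_rstar_eq_root : 0 < a -> a < 2 ->
  exists2 r : R, 0 < r & rstar_eq a r = 0.
Proof.
move=> a_gt0 a_lt2; have [M M_ge1 fM_lt0] := exists_rstar_eq_lt0 a_gt0 a_lt2.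
have cont : {within `[1, M], continuous (rstar_eq a)}%classic.
  apply: derivable_within_continuous => z; rewrite in_itv /= => /andP[z_ge1 _].
  by apply: derivable_rstar_eq; lra.
have sign : Num.min (rstar_eq a 1) (rstar_eq a M) <= 0
             <= Num.max (rstar_eq a 1) (rstar_eq a M).
  by rewrite ge_min le_max (ltW fM_lt0) (ltW (rstar_eq1_gt0 a_gt0 a_lt2)) orbT.
have [r] := IVT M_ge1 cont sign.
by rewrite in_itv /= => /andP[r_ge1 _] fr; exists r => //; lra.
Qed.

Lemma rstar_eq_rootE (z : R) : 0 < a -> a < 2 -> 0 < z -> rstar_eq a z = 0 ->
  a * z `^ (1 - a / 2) = z^-1 + 1 + a.
Proof.
move=> a_gt0 a_lt2 z_gt0.
rewrite rstar_eqE ?ltW // => /eqP; rewrite subr_eq0 => /eqP fz.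
apply: (mulIf (lt0r_neq0 z_gt0)).
by rewrite mulrAC -mulrA -fz; field; rewrite !gt_eqF.
Qed.

Lemma rstar_eq_root_uniq (z r : R) : 0 < a -> a < 2 ->
  0 < z -> rstar_eq a z = 0 -> 0 < r -> rstar_eq a r = 0 -> z = r.
Proof.
move=> a_gt0 a_lt2 z_gt0 fz r_gt0 fr.
have pow_lt (u v : R) : 0 < u -> u < v -> a * u `^ (1 - a / 2) < a * v `^ (1 - a / 2).
  move=> u_gt0 uv; rewrite ltr_pM2l // gt0_ltr_powR ?nnegrE ?ltW //; lra.
have inv_lt (u v : R) : 0 < u -> u < v -> v^-1 < u^-1.
  by move=> u_gt0 uv; rewrite ltf_pV2 ?posrE // (lt_trans u_gt0).
have Ez := rstar_eq_rootE a_gt0 a_lt2 z_gt0 fz.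
have Er := rstar_eq_rootE a_gt0 a_lt2 r_gt0 fr.
case: (ltgtP z r) => // [zr | rz].
- by have := pow_lt _ _ z_gt0 zr; have := inv_lt _ _ z_gt0 zr; lra.
- by have := pow_lt _ _ r_gt0 rz; have := inv_lt _ _ r_gt0 rz; lra.
Qed.

End RstarRoot.

Lemma gfun_chord_gt0 (R : realFieldType) (a r s x y : R) :
  0 < a -> a <= 1 -> s * r = 1 + (1 + a) * r ->
  0 <= x -> x <= r -> 0 <= y -> y < r ->
  0 < (2 + 2 * (1 + a) * x - s * x) / (1 + x) - s * y / (1 + y).
Proof.
move=> a_gt0 a_le1 sr x_ge0 xr y_ge0 yr.
have r_gt0 : 0 < r by lra.
have s_gt0 : 0 < s.
  by rewrite -(pmulr_lgt0 _ r_gt0) sr addr_gt0 // mulr_gt0 //; lra.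
have y_term : s * y / (1 + y) < s * r / (1 + r).
  rewrite ltr_pdivrMr; last lra.
  rewrite mulrAC ltr_pdivlMr; last lra.
  have : 0 < s * (r - y) by rewrite mulr_gt0 // subr_gt0.
  lra.
have x_term : s * r / (1 + r) <= (2 + 2 * (1 + a) * x - s * x) / (1 + x).
  rewrite ler_pdivrMr; last lra.
  rewrite mulrAC ler_pdivlMr; last lra.
  have gap : r * ((2 + 2 * (1 + a) * x - s * x) * (1 + r) - s * r * (1 + x))
             = (r - x) * (1 + (1 - a) * r).
    have -> : r * ((2 + 2 * (1 + a) * x - s * x) * (1 + r) - s * r * (1 + x))
              = r * (2 + 2 * (1 + a) * x) * (1 + r) - s * r * (x * (1 + r) + r * (1 + x)).
      by ring.
    by rewrite sr; ring.
  rewrite -subr_ge0 -(pmulr_rge0 _ r_gt0) gap mulr_ge0 ?subr_ge0 //; nra.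
lra.
Qed.

Lemma gfun_gt0 (R : realType) (a r x y : R) : 0 < a -> a <= 1 ->
  0 < r -> rstar_eq a r = 0 -> 0 <= x -> x < r -> 0 <= y -> y < r ->
  0 < gfun x y a.
Proof.
move=> a_gt0 a_le1 r_gt0 fr x_ge0 xr y_ge0 yr.
have a_lt2 : a < 2 by lra.
pose s := a * r `^ (1 - a / 2).
have sr : s * r = 1 + (1 + a) * r.
  by rewrite /s rstar_eq_rootE //; field; rewrite gt_eqF.
have chord (t : R) : 0 <= t -> t <= r -> a * t `^ (2 - a / 2) <= s * t.
  move=> t_ge0 tr; rewrite powR_2_sub_half //; last lra.
  rewrite mulrCA [s * t]mulrC ler_wpM2l // ler_pM2l //.
  by rewrite ge0_ler_powR ?nnegrE ?(ltW r_gt0) //; lra.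
have x_term : (2 + 2 * (1 + a) * x - s * x) / (1 + x)
              <= (2 + 2 * (1 + a) * x - a * x `^ (2 - a / 2)) / (1 + x).
  rewrite ler_pM2r ?invr_gt0; last lra.
  by have := chord x x_ge0 (ltW xr); lra.
have y_term : a * y `^ (2 - a / 2) / (1 + y) <= s * y / (1 + y).
  by rewrite ler_pM2r ?invr_gt0 ?chord ?(ltW yr) //; lra.
have := gfun_chord_gt0 a_gt0 a_le1 sr x_ge0 (ltW xr) y_ge0 yr.
rewrite /gfun; lra.
Qed.

Theorem lemma2p1 (R : realType) (a : R) (ha0 : 0 < a) (ha1 : a < 1) :
  exists r : R,
    [/\ 0 < r, rstar_eq a r = 0,
        (forall z : R, 0 < z -> rstar_eq a z = 0 -> z = r)
      & (forall x y : R, 0 <= x -> x < r -> 0 <= y -> y < r -> 0 < gfun x y a)].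
Proof.
have a_lt2 : a < 2 by lra.
have [r r_gt0 fr] := exists_rstar_eq_root ha0 a_lt2.
exists r; split => // [z z_gt0 fz | x y x_ge0 xr y_ge0 yr].
- exact: rstar_eq_root_uniq ha0 a_lt2 z_gt0 fz r_gt0 fr.
- exact: gfun_gt0 ha0 (ltW ha1) r_gt0 fr x_ge0 xr y_ge0 yr.
Qed.
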